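(* Let $p\ge 3$ and $q\in\{0,1,\dots,p-3\}$ be integers, let $x$ be a right vertex of $T_H$, let $f$ be any $2p$ distance coloring of $T_H$, and let $v\in\mathcal{F}^{nc}_{x,p-q}$ be a non corner vertex. Then $$\big|\{u\in\mathcal{F}_{x,p+q+1} : f(u)=f(v)\}\big|\le 1.$$
   Context: $T_H$ is the infinite hexagonal grid with vertex set $\mathbb{Z}^2$: $(i,j)$ is adjacent to $(i,j\pm1)$, and $(i,j)$ is adjacent to $(i+1,j)$ iff $i+j$ is even; no other edges. A vertex $(i,j)$ with $i+j$ even is called a right vertex. $d(u,v)$ is graph distance. A $2p$ distance coloring is a map $f:V(T_H)\to\{1,\dots,n\}$ with $f(u)\ne f(v)$ for all distinct $u,v$ with $d(u,v)\le 2p$. For a vertex $x$ and integer $k\ge0$, $\mathcal{F}_{x,k}=\{u: d(x,u)=k\}$. For a right vertex $x=(i,j)$ and $k\ge2$, the six corner vertices of $\mathcal{F}_{x,k}$ are $(i,j+k)$, $(i+\lceil k/2\rceil, j+\lfloor k/2\rfloor)$, $(i+\lceil k/2\rceil, j-\lfloor k/2\rfloor)$, $(i,j-k)$, $(i-\lfloor k/2\rfloor, j-\lceil k/2\rceil)$, $(i-\lfloor k/2\rfloor, j+\lceil k/2\rceil)$ (all lie in $\mathcal{F}_{x,k}$); their set is denoted $\mathcal{F}^c_{x,k}$, and $\mathcal{F}^{nc}_{x,k}=\mathcal{F}_{x,k}\setminus\mathcal{F}^c_{x,k}$ is the set of non corner vertices. *)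

From Stdlib Require Import ZArith Arith Lia.
Open Scope Z_scope.

Definition vertex := (Z * Z)%type.

Definition right_vertex (x : vertex) : Prop := Z.even (fst x + snd x) = true.

Definition adj (u v : vertex) : Prop :=
  (fst u = fst v /\ (snd v = snd u + 1 \/ snd v = snd u - 1)) \/
  (snd u = snd v /\
     ((fst v = fst u + 1 /\ Z.even (fst u + snd u) = true) \/
      (fst u = fst v + 1 /\ Z.even (fst v + snd v) = true))).

Inductive walk : nat -> vertex -> vertex -> Prop :=
| walk_nil : forall u, walk 0 u u
| walk_cons : forall n u w v, adj u w -> walk n w v -> walk (S n) u v.

Definition dist_eq (u v : vertex) (k : nat) : Prop :=
  walk k u v /\ forall m : nat, (m < k)%nat -> ~ walk m u v.

Definition dist_le (u v : vertex) (k : nat) : Prop :=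
  exists m : nat, (m <= k)%nat /\ walk m u v.

Definition distance_coloring (p n : nat) (f : vertex -> nat) : Prop :=
  (forall u, (1 <= f u)%nat /\ (f u <= n)%nat) /\
  (forall u v, u <> v -> dist_le u v (2 * p) -> f u <> f v).

Definition F (x : vertex) (k : nat) (u : vertex) : Prop := dist_eq x u k.

(* the six corner vertices of F_{x,k} (x right vertex, k >= 2) *)
Definition corner (x : vertex) (k : nat) (u : vertex) : Prop :=
  let i := fst x in let j := snd x in let K := Z.of_nat k in
  let c := (K + 1) / 2 in
  let fl := K / 2 in
  u = (i, j + K) \/ u = (i + c, j + fl) \/ u = (i + c, j - fl) \/
  u = (i, j - K) \/ u = (i - fl, j - c) \/ u = (i - fl, j + c).

Definition F_nc (x : vertex) (k : nat) (u : vertex) : Prop :=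
  F x k u /\ ~ corner x k u.

From Stdlib Require Import ZArith Arith Lia.
Open Scope Z_scope.

(* The graph distance from a right vertex to the vertex displaced by (s, t)
   has the closed form [hex_norm s t]; hence the sphere of radius k around a
   right vertex x is a hexagon whose six corners are those of the paper.  If v
   lies strictly inside a side of the sphere of radius p - q, a vertex u of the
   sphere of radius p + q + 1 can be at distance 2p + 1, the sum of the radii,
   from v only if it lies on the opposite side of that sphere.  Two vertices on one side of a
   sphere of radius r are within distance r + 1 <= 2p of each other, so two
   such vertices sharing the colour of v must coincide. *)

(* |s| horizontal edges, plus the vertical ones: at least |t| of them, at least
   s - 1 (resp. -s) since consecutive horizontal edges must be separated by a
   vertical one, and their number has the parity of t. *)
Definition hex_norm (s t : Z) : Z :=
  let m := Z.max (Z.abs t) (Z.max (s - 1) (- s)) in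
  Z.abs s + m + (m - t) mod 2.

Definition hex_dist (a b : vertex) : Z :=
  let s := fst b - fst a in
  let t := snd b - snd a in
  if Z.even (fst a + snd a) then hex_norm s t else hex_norm (- s) t.

Ltac parity_cases := repeat match goal with
  | H : context [Z.even ?n] |- _ => rewrite (Zeven_mod n) in H
  | |- context [Z.even ?n] => rewrite (Zeven_mod n)
  | H : context [?n =? ?m] |- _ => destruct (Z.eqb_spec n m)
  | |- context [?n =? ?m] => destruct (Z.eqb_spec n m)
  end.

Ltac div_lia := Z.to_euclidean_division_equations; lia.

Ltac hex_arith :=
  repeat match goal with w : vertex |- _ => destruct w end;
  unfold adj, hex_dist, hex_norm in *; cbn [fst snd] in *;
  parity_cases; try discriminate; div_lia.

Lemma hex_dist_nonneg a b : 0 <= hex_dist a b.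
Proof. hex_arith. Qed.

Lemma hex_dist_eq0 a b : hex_dist a b = 0 -> a = b.
Proof.
  intros Hab; enough (fst a = fst b /\ snd a = snd b)
    by (destruct a, b; cbn in *; f_equal; lia).
  revert Hab; hex_arith.
Qed.

Lemma hex_dist_adj a w b : adj a w -> hex_dist a b <= 1 + hex_dist w b.
Proof. hex_arith. Qed.

Lemma hex_dist_step a b : 0 < hex_dist a b ->
  exists w, adj a w /\ hex_dist w b = hex_dist a b - 1.
Proof.
  destruct a as [i j], b as [i' j']; intros Hpos.
  assert (Hvert : j' < j \/ j <= j') by lia.
  destruct (Z.even (i + j)) eqn:Hij.
  - destruct (Z_le_gt_dec 1 (i' - i)); [exists (i + 1, j) |
      destruct Hvert; [exists (i, j - 1) | exists (i, j + 1)]];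
      split; revert Hpos; hex_arith.
  - destruct (Z_le_gt_dec 1 (i - i')); [exists (i - 1, j) |
      destruct Hvert; [exists (i, j - 1) | exists (i, j + 1)]];
      split; revert Hpos; hex_arith.
Qed.

Lemma hex_dist_walk n a b : walk n a b -> hex_dist a b <= Z.of_nat n.
Proof.
  induction 1 as [u | n u w v Huw _ IH].
  - hex_arith.
  - pose proof (hex_dist_adj u w v Huw); lia.
Qed.

Lemma walk_of_hex_dist n a b : hex_dist a b = Z.of_nat n -> walk n a b.
Proof.
  revert a; induction n as [|n IH]; intros a Hab.
  - rewrite (hex_dist_eq0 a b Hab); constructor.
  - destruct (hex_dist_step a b) as [w [Haw Hwb]]; [lia|].
    apply (walk_cons n a w b Haw), IH; lia.
Qed.

Lemma adj_sym a b : adj a b -> adj b a.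
Proof. unfold adj; intuition lia. Qed.

Lemma walk_rcons n a w b : walk n a w -> adj w b -> walk (S n) a b.
Proof.
  induction 1 as [u | n u w' v Huw _ IH]; intros Hwb.
  - exact (walk_cons 0 u b b Hwb (walk_nil b)).
  - exact (walk_cons (S n) u w' b Huw (IH Hwb)).
Qed.

Lemma walk_rev n a b : walk n a b -> walk n b a.
Proof.
  induction 1 as [u | n u w v Huw _ IH]; [constructor|].
  exact (walk_rcons n v w u IH (adj_sym u w Huw)).
Qed.

Lemma F_hex_dist x k u : F x k u -> hex_dist x u = Z.of_nat k.
Proof.
  intros [Hwalk Hmin]; pose proof (hex_dist_walk _ _ _ Hwalk).
  pose proof (hex_dist_nonneg x u).
  destruct (Z.eq_dec (hex_dist x u) (Z.of_nat k)) as [e | ne]; [exact e|].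
  exfalso; apply (Hmin (Z.to_nat (hex_dist x u))); [lia|].
  apply walk_of_hex_dist; lia.
Qed.

Lemma dist_le_of_hex_dist u v m : hex_dist v u <= Z.of_nat m -> dist_le u v m.
Proof.
  intros H; pose proof (hex_dist_nonneg v u).
  exists (Z.to_nat (hex_dist v u)); split; [lia|].
  apply walk_rev, walk_of_hex_dist; lia.
Qed.

Lemma colour_clash_far p n f u v : distance_coloring p n f ->
  u <> v -> f u = f v -> Z.of_nat (2 * p) < hex_dist v u.
Proof.
  intros [_ Hcol] Huv Hf; apply Z.nle_gt; intros Hle.
  exact (Hcol u v Huv (dist_le_of_hex_dist u v _ Hle) Hf).
Qed.

Definition vsub (a x : vertex) : vertex := (fst a - fst x, snd a - snd x).

Lemma hex_dist_vsub x a b : right_vertex x ->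
  hex_dist (vsub a x) (vsub b x) = hex_dist a b.
Proof.
  unfold right_vertex, hex_dist, vsub; cbn; intros Hx.
  replace (fst a - fst x + (snd a - snd x)) with (fst a + snd a - (fst x + snd x)) by lia.
  rewrite Z.even_sub, Hx; destruct (Z.even (fst a + snd a)); cbn; f_equal; lia.
Qed.

Lemma F_hex_dist_centred x k u : right_vertex x ->
  F x k u -> hex_dist (0, 0) (vsub u x) = Z.of_nat k.
Proof.
  intros Hx Hu; replace (0, 0) with (vsub x x) by (unfold vsub; f_equal; lia).
  rewrite hex_dist_vsub by exact Hx; exact (F_hex_dist x k u Hu).
Qed.

Lemma hex_norm_diagonal s t : Z.max (s - 1) (- s) <= Z.abs t ->
  hex_norm s t = Z.abs s + Z.abs t.
Proof.
  unfold hex_norm; intros; rewrite Z.max_l by lia.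
  replace (Z.abs t - t) with (Z.max 0 (- t) * 2) by lia.
  rewrite Z_mod_mult; lia.
Qed.

Lemma hex_norm_right s t : 1 <= s -> Z.abs t < s - 1 ->
  hex_norm s t = 2 * s - 1 + (s - 1 - t) mod 2.
Proof. unfold hex_norm; intros; rewrite Z.max_r, Z.max_l by lia; lia. Qed.

Lemma hex_norm_left s t : s <= -1 -> Z.abs t < - s ->
  hex_norm s t = - 2 * s + (- s - t) mod 2.
Proof. unfold hex_norm; intros; rewrite !Z.max_r by lia; lia. Qed.

Inductive side := TopRight | TopLeft | BottomRight | BottomLeft | Right | Left.

Definition opposite (s : side) : side :=
  match s with
  | TopRight => BottomLeft | BottomLeft => TopRight
  | TopLeft => BottomRight | BottomRight => TopLeft
  | Right => Left | Left => Right
  end.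

(* The sphere of radius c + l around the right vertex (0, 0), with c and l the
   ceiling and floor of half the radius, is the hexagon with these sides; the
   vertical sides contain every other vertex only. *)
Definition on_side (c l : Z) (s : side) (w : vertex) : Prop :=
  let i := fst w in let j := snd w in
  match s with
  | TopRight => i + j = c + l /\ 0 <= i <= c
  | TopLeft => - i + j = c + l /\ 0 <= - i <= l
  | BottomRight => i - j = c + l /\ 0 <= i <= c
  | BottomLeft => - i - j = c + l /\ 0 <= - i <= l
  | Right => i = c /\ Z.abs j <= l /\ (j - l) mod 2 = 0
  | Left => i = - l /\ Z.abs j <= c /\ (j - c) mod 2 = 0
  end.

Definition in_side (c l : Z) (s : side) (w : vertex) : Prop :=
  let i := fst w in let j := snd w in
  match s with
  | TopRight => i + j = c + l /\ 0 < i < c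
  | TopLeft => - i + j = c + l /\ 0 < - i < l
  | BottomRight => i - j = c + l /\ 0 < i < c
  | BottomLeft => - i - j = c + l /\ 0 < - i < l
  | Right => i = c /\ Z.abs j < l /\ (j - l) mod 2 = 0
  | Left => i = - l /\ Z.abs j < c /\ (j - c) mod 2 = 0
  end.

Definition hex_corner (c l : Z) (w : vertex) : Prop :=
  let i := fst w in let j := snd w in
  (i = 0 /\ j = c + l) \/ (i = c /\ j = l) \/ (i = c /\ j = - l) \/
  (i = 0 /\ j = - (c + l)) \/ (i = - l /\ j = - c) \/ (i = - l /\ j = c).

Lemma sphere_on_side c l w : l <= c <= l + 1 -> 1 <= l ->
  hex_dist (0, 0) w = c + l -> exists s, on_side c l s w.
Proof.
  destruct w as [i j]; unfold hex_dist; cbn; rewrite !Z.sub_0_r; intros Hc Hl Hw.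
  destruct (Z_le_gt_dec (Z.max (i - 1) (- i)) (Z.abs j)).
  - rewrite hex_norm_diagonal in Hw by assumption.
    destruct (Z_le_gt_dec 0 i), (Z_le_gt_dec 0 j);
      [exists TopRight | exists BottomRight | exists TopLeft | exists BottomLeft]; cbn; lia.
  - destruct (Z_le_gt_dec 1 i).
    + rewrite hex_norm_right in Hw by lia; exists Right; cbn; div_lia.
    + rewrite hex_norm_left in Hw by lia; exists Left; cbn; div_lia.
Qed.

Lemma on_side_in_side c l s w :
  on_side c l s w -> ~ hex_corner c l w -> in_side c l s w.
Proof. unfold hex_corner; destruct s; cbn; lia. Qed.

Lemma ceil_floor_half k : 0 <= k ->
  (k + 1) / 2 + k / 2 = k /\ k / 2 <= (k + 1) / 2 <= k / 2 + 1.
Proof. intros; div_lia. Qed.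

Ltac pick_disjunct := first [left; f_equal; lia | right; pick_disjunct | f_equal; lia].

Lemma corner_of_hex_corner x k u :
  hex_corner ((Z.of_nat k + 1) / 2) (Z.of_nat k / 2) (vsub u x) -> corner x k u.
Proof.
  destruct (ceil_floor_half (Z.of_nat k)) as [Hk _]; [lia|].
  destruct x, u; unfold hex_corner, corner, vsub; cbn.
  intros [H | [H | [H | [H | [H | H]]]]]; pick_disjunct.
Qed.

Lemma F_on_side x k u : right_vertex x -> (2 <= k)%nat -> F x k u ->
  exists s, on_side ((Z.of_nat k + 1) / 2) (Z.of_nat k / 2) s (vsub u x).
Proof.
  intros Hx Hk Hu; destruct (ceil_floor_half (Z.of_nat k)) as [Hsum Hc]; [lia|].
  apply sphere_on_side; [exact Hc | lia | rewrite (F_hex_dist_centred x k u Hx Hu); lia].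
Qed.

Lemma far_on_opposite_side c1 l1 c2 l2 s s' v u :
  l1 <= c1 <= l1 + 1 -> 1 <= l1 -> l2 <= c2 <= l2 + 1 -> 0 <= l2 ->
  in_side c1 l1 s v -> on_side c2 l2 s' u ->
  c1 + l1 + (c2 + l2) <= hex_dist v u -> on_side c2 l2 (opposite s) u.
Proof. destruct s, s'; unfold in_side, on_side; cbn [opposite]; hex_arith. Qed.

Lemma side_diameter c l s u w : l <= c <= l + 1 -> 0 <= l ->
  on_side c l s u -> on_side c l s w -> hex_dist u w <= c + l + 1.
Proof. destruct s; unfold on_side; hex_arith. Qed.

Theorem mainTheorem7 (p q : nat) (x : vertex) (n : nat) (f : vertex -> nat) (v : vertex) :
  (3 <= p)%nat -> (q <= p - 3)%nat ->
  right_vertex x ->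
  distance_coloring p n f ->
  F_nc x (p - q) v ->
  forall u1 u2 : vertex,
    F x (p + q + 1) u1 -> f u1 = f v ->
    F x (p + q + 1) u2 -> f u2 = f v ->
    u1 = u2.
Proof.
  intros Hp Hq Hx Hf [Fv Hnc] u1 u2 F1 e1 F2 e2.
  destruct (ceil_floor_half (Z.of_nat (p - q))) as [Hk1 Hc1]; [lia|].
  destruct (ceil_floor_half (Z.of_nat (p + q + 1))) as [Hk2 Hc2]; [lia|].
  assert (Hfar : forall u, F x (p + q + 1) u -> f u = f v ->
            Z.of_nat (2 * p) < hex_dist (vsub v x) (vsub u x)).
  { intros u Fu Hu; rewrite hex_dist_vsub by exact Hx.
    apply (colour_clash_far p n f u v Hf); [|exact Hu].
    intros ->; apply F_hex_dist in Fu, Fv; lia. }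
  destruct (F_on_side x (p - q) v Hx ltac:(lia) Fv) as [s Hv].
  pose proof (on_side_in_side _ _ _ _ Hv (fun H => Hnc (corner_of_hex_corner x _ v H))) as Hin.
  destruct (F_on_side x (p + q + 1) u1 Hx ltac:(lia) F1) as [s1 Hu1].
  destruct (F_on_side x (p + q + 1) u2 Hx ltac:(lia) F2) as [s2 Hu2].
  pose proof (far_on_opposite_side _ _ _ _ _ _ _ _ Hc1 ltac:(lia) Hc2 ltac:(lia) Hin Hu1
    ltac:(specialize (Hfar u1 F1 e1); lia)) as Hopp1.
  pose proof (far_on_opposite_side _ _ _ _ _ _ _ _ Hc1 ltac:(lia) Hc2 ltac:(lia) Hin Hu2
    ltac:(specialize (Hfar u2 F2 e2); lia)) as Hopp2.
  pose proof (side_diameter _ _ _ _ _ Hc2 ltac:(lia) Hopp1 Hopp2) as Hdiam.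
  rewrite hex_dist_vsub in Hdiam by exact Hx.
  assert (Hdec : {u1 = u2} + {u1 <> u2}) by (decide equality; apply Z.eq_dec).
  destruct Hdec as [| Hne]; [assumption | exfalso].
  pose proof (colour_clash_far p n f u2 u1 Hf (not_eq_sym Hne) ltac:(congruence)); lia.
Qed.
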